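(* Let $G,\Omega$ be domains in $\mathbb{C}$, let $K\subset K'$ be compact subsets of $G$, and let $\phi:G\to\Omega$ be holomorphic and injective on a neighbourhood of $K'$. If $K$ is $G$-convex and $\phi(K')$ is $\Omega$-convex, then $\phi(K)$ is $\Omega$-convex.
   Context: A hole of a set $E\subset\mathbb{C}$ is a non-empty bounded connected component of $\mathbb{C}\setminus E$. For an open set $\Omega$, a compact set $K\subset\Omega$ is $\Omega$-convex if every hole of $K$ contains a point of $\mathbb{C}\setminus\Omega$. *)

(* Stdlib reals + Coquelicot complex numbers C.
   Complex differentiability = Coquelicot's is_derive on C viewed as a
   normed module over the absolute-value ring C (limit over complex h). *)
From Stdlib Require Import Reals List.
From Coquelicot Require Import Coquelicot.
Open Scope R_scope.

Definition Copen (D : C -> Prop) : Prop := @open C_UniformSpace D.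

Definition Cconnected (S : C -> Prop) : Prop :=
  forall U V : C -> Prop, Copen U -> Copen V ->
    (forall z, S z -> U z \/ V z) ->
    (forall z, S z -> U z -> V z -> False) ->
    (exists z, S z /\ U z) -> (exists z, S z /\ V z) -> False.

Definition Cdomain (D : C -> Prop) : Prop :=
  Copen D /\ (exists z, D z) /\ Cconnected D.

Definition Cbounded (S : C -> Prop) : Prop :=
  exists M : R, forall z, S z -> Cmod z <= M.

Definition Ccompact (K : C -> Prop) : Prop :=
  forall (I : Type) (U : I -> C -> Prop),
    (forall i, Copen (U i)) ->
    (forall z, K z -> exists i, U i z) ->
    exists l : list I, forall z, K z -> exists i, In i l /\ U i z.

Definition component (A : C -> Prop) (x : C) : C -> Prop :=
  fun y => exists S : C -> Prop, Cconnected S /\ (forall z, S z -> A z) /\ S x /\ S y.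

Definition hole (E H : C -> Prop) : Prop :=
  (exists x, ~ E x /\ forall y, H y <-> component (fun z => ~ E z) x y) /\
  Cbounded H.

Definition Oconvex (Omega K : C -> Prop) : Prop :=
  Ccompact K /\ (forall z, K z -> Omega z) /\
  forall H, hole K H -> exists w, H w /\ ~ Omega w.

Definition holomorphic_on (f : C -> C) (U : C -> Prop) : Prop :=
  forall z, U z -> exists l : C, is_derive (K := C_AbsRing) (V := C_NormedModule) f z l.

Definition injective_on (f : C -> C) (U : C -> Prop) : Prop :=
  forall z w, U z -> U w -> f z = f w -> z = w.

Definition image (f : C -> C) (K : C -> Prop) : C -> Prop :=
  fun w => exists z, K z /\ w = f z.

(* Let F = phi(K), F' = phi(K') and let H be a hole of F.  If H leaves F', the component
   of C \ F' it reaches is a hole of F' inside H, and it meets C \ Omega.  Otherwise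
   H is contained in F', and W = U /\ phi^-1(H) is open, contained in K', and, by continuity
   and injectivity of phi, closed in C \ K.  The component of C \ K through a point of W
   is then a bounded hole of K lying in U, which is contained in G: this contradicts the
   G-convexity of K. *)

From Stdlib Require Import Reals List Lra Classical.
From Coquelicot Require Import Coquelicot.
Open Scope R_scope.

Lemma unit_interval_connected (P Q : R -> Prop) :
  (forall t, 0 <= t <= 1 -> P t \/ Q t) ->
  (forall t, 0 <= t <= 1 -> P t -> Q t -> False) ->
  (forall t, 0 <= t <= 1 -> P t -> locally t P) ->
  (forall t, 0 <= t <= 1 -> Q t -> locally t Q) ->
  P 0 -> Q 1 -> False.
Proof.
intros cover disj openP openQ P0 Q1.
set (E := fun t => 0 <= t <= 1 /\ forall u, 0 <= u <= t -> P u).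
assert (E0 : E 0).
{ split; [lra|]. intros u hu. replace u with 0 by lra. exact P0. }
destruct (completeness E) as [s [s_ub s_lub]].
{ exists 1. intros t [ht _]. lra. }
{ now exists 0. }
assert (s_01 : 0 <= s <= 1).
{ split; [now apply s_ub | apply s_lub; intros t [ht _]; lra]. }
assert (P_below : forall u, 0 <= u < s -> P u).
{ intros u hu. apply NNPP. intros nPu.
  assert (s <= u); [|lra].
  apply s_lub. intros t [_ Pt]. apply Rnot_lt_le. intros ut. apply nPu, Pt. lra. }
destruct (cover s s_01) as [Ps | Qs].
- destruct (Rle_lt_or_eq_dec s 1 (proj2 s_01)) as [s_lt | ->];
    [|now apply (disj 1); [lra | |]].
  destruct (openP s s_01 Ps) as [d Pd]. pose proof (cond_pos d).
  set (t := Rmin 1 (s + d / 2)).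
  assert (t_gt : s < t) by (unfold t, Rmin; destruct Rle_dec; lra).
  enough (Et : E t) by (specialize (s_ub t Et); lra).
  split; [unfold t, Rmin; destruct Rle_dec; lra|].
  intros u hu. destruct (Rlt_le_dec u s); [apply P_below; lra|].
  apply Pd. change (Rabs (u - s) < d).
  assert (t_le : t <= s + d / 2) by apply Rmin_r.
  rewrite Rabs_pos_eq; lra.
- destruct (Rle_lt_or_eq_dec 0 s (proj1 s_01)) as [s_gt | <-];
    [|now apply (disj 0); [lra | |]].
  destruct (openQ s s_01 Qs) as [d Qd]. pose proof (cond_pos d).
  set (u := Rmax 0 (s - d / 2)).
  assert (u_lt : u < s) by (unfold u, Rmax; destruct Rle_dec; lra).
  apply (disj u).
  + assert (u_ge : 0 <= u) by apply Rmax_l. lra.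
  + apply P_below. split; [apply Rmax_l | exact u_lt].
  + apply Qd. change (Rabs (u - s) < d).
    assert (u_ge : s - d / 2 <= u) by apply Rmax_r.
    rewrite Rabs_left; lra.
Qed.

Lemma Cconnected_of_paths (S : C -> Prop) :
  (forall a b, S a -> S b -> exists g : R -> C,
     g 0 = a /\ g 1 = b /\ forall t, 0 <= t <= 1 -> S (g t) /\ continuous g t) ->
  Cconnected S.
Proof.
intros paths U V HU HV cover disj [a [Sa Ua]] [b [Sb Vb]].
destruct (paths a b Sa Sb) as [g [g0 [g1 Hg]]].
apply (unit_interval_connected (fun t => U (g t)) (fun t => V (g t))).
- intros t ht. apply cover, Hg, ht.
- intros t ht. apply disj, Hg, ht.
- intros t ht Ut. exact (proj2 (Hg t ht) U (HU _ Ut)).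
- intros t ht Vt. exact (proj2 (Hg t ht) V (HV _ Vt)).
- now rewrite g0.
- now rewrite g1.
Qed.

Definition segment (a b : C) (t : R) : C :=
  (fst a + t * (fst b - fst a), snd a + t * (snd b - snd a)).

Lemma segment_continuous (a b : C) (t : R) : continuous (segment a b) t.
Proof.
apply (continuous_ext (fun s : R => @plus C_R_NormedModule a (scal s (minus b a)))).
{ intros s. destruct a, b. reflexivity. }
apply continuous_plus; [apply continuous_const |].
apply (continuous_scal_l (V := C_R_NormedModule) (fun x : R => x)), continuous_id.
Qed.

Lemma convex_combination_lt (t x y r : R) :
  0 <= t <= 1 -> Rabs x < r -> Rabs y < r -> Rabs ((1 - t) * x + t * y) < r.
Proof.
intros ht hx hy. eapply Rle_lt_trans; [apply Rabs_triang|].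
rewrite !Rabs_mult, (Rabs_pos_eq t), (Rabs_pos_eq (1 - t)) by lra.
destruct (Req_dec t 1) as [-> | ]; nra.
Qed.

Lemma ball_segment (c a b : C) (r t : R) :
  ball c r a -> ball c r b -> 0 <= t <= 1 -> ball c r (segment a b t).
Proof.
destruct a as [a1 a2], b as [b1 b2], c as [c1 c2].
intros [ha1 ha2] [hb1 hb2] ht.
change (Rabs (a1 - c1) < r) in ha1. change (Rabs (a2 - c2) < r) in ha2.
change (Rabs (b1 - c1) < r) in hb1. change (Rabs (b2 - c2) < r) in hb2.
split.
- change (Rabs (a1 + t * (b1 - a1) - c1) < r).
  replace (a1 + t * (b1 - a1) - c1) with ((1 - t) * (a1 - c1) + t * (b1 - c1)) by ring.
  now apply convex_combination_lt.
- change (Rabs (a2 + t * (b2 - a2) - c2) < r).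
  replace (a2 + t * (b2 - a2) - c2) with ((1 - t) * (a2 - c2) + t * (b2 - c2)) by ring.
  now apply convex_combination_lt.
Qed.

Lemma ball_connected (c : C) (r : R) : Cconnected (ball c r).
Proof.
apply Cconnected_of_paths. intros a b Ha Hb. exists (segment a b).
split; [|split].
- destruct a. unfold segment. simpl. f_equal; ring.
- destruct a, b. unfold segment. simpl. f_equal; ring.
- intros t ht. split; [now apply ball_segment | apply segment_continuous].
Qed.

Lemma Cconnected_union (S T : C -> Prop) :
  Cconnected S -> Cconnected T -> (exists z, S z /\ T z) ->
  Cconnected (fun z => S z \/ T z).
Proof.
intros HS HT [w [Sw Tw]] U V HU HV cover disj [u [Su Uu]] [v [Sv Vv]].
destruct (cover w (or_introl Sw)) as [Uw | Vw].
- assert (nS : forall z, S z -> V z -> False) by (intros z Sz Vz; apply (HS U V); eauto).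
  assert (nT : forall z, T z -> V z -> False) by (intros z Tz Vz; apply (HT U V); eauto).
  destruct Sv; eauto.
- assert (nS : forall z, S z -> U z -> False) by (intros z Sz Uz; apply (HS U V); eauto).
  assert (nT : forall z, T z -> U z -> False) by (intros z Tz Uz; apply (HT U V); eauto).
  destruct Su; eauto.
Qed.

Lemma Cconnected_singleton (x : C) : Cconnected (fun z => z = x).
Proof. intros U V _ _ _ disj [u [-> Uu]] [v [-> Vv]]. eauto. Qed.

Lemma component_sub (A : C -> Prop) (x y : C) : component A x y -> A y.
Proof. intros [S [_ [SA [_ Sy]]]]. auto. Qed.

Lemma component_refl (A : C -> Prop) (x : C) : A x -> component A x x.
Proof.
intros Ax. exists (fun z => z = x).
split; [apply Cconnected_singleton | split; [intros z ->; exact Ax | auto]].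
Qed.

Lemma component_absorb (A S : C -> Prop) (x : C) :
  Cconnected S -> (forall z, S z -> A z) -> (exists y, S y /\ component A x y) ->
  forall v, S v -> component A x v.
Proof.
intros cS SA [y [Sy [S0 [cS0 [S0A [S0x S0y]]]]]] v Sv.
exists (fun z => S0 z \/ S z). split; [apply Cconnected_union; eauto|].
split; [intros z [] | ]; auto.
Qed.

Lemma component_open (A : C -> Prop) (x : C) : Copen A -> Copen (component A x).
Proof.
intros HA y Hy. destruct (HA y (component_sub _ _ _ Hy)) as [e He].
exists e. apply (component_absorb A (ball y e)); [apply ball_connected | exact He |].
exists y. split; [apply ball_center | exact Hy].
Qed.

Lemma component_within_clopen (A W : C -> Prop) (x : C) :
  Copen W -> (forall p, A p -> ~ W p -> locally p (fun y => ~ W y)) -> W x ->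
  forall y, component A x y -> W y.
Proof.
intros HW W_closed Wx y [S [cS [SA [Sx Sy]]]].
apply NNPP. intros nWy.
apply (cS W (fun z => locally z (fun y => ~ W y)) HW).
- intros z Hz. now apply locally_locally.
- intros z Sz. destruct (classic (W z)); [left | right; apply W_closed]; auto.
- intros z _ Wz Hz. exact (locally_singleton _ _ Hz Wz).
- now exists x.
- exists y. split; [exact Sy | exact (W_closed y (SA y Sy) nWy)].
Qed.

Lemma not_locally_not {T : UniformSpace} (W Q : T -> Prop) (p : T) :
  ~ locally p (fun y => ~ W y) -> locally p Q -> exists z, W z /\ Q z.
Proof.
intros nloc HQ. apply NNPP. intros nWQ. apply nloc.
apply (filter_imp Q); [intros z Qz Wz; apply nWQ; eauto | exact HQ].
Qed.

Lemma Ccompact_monotone_cover (K : C -> Prop) (U : nat -> C -> Prop) :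
  Ccompact K -> (forall n, Copen (U n)) ->
  (forall n m z, (n <= m)%nat -> U n z -> U m z) ->
  (forall z, K z -> exists n, U n z) ->
  exists n, forall z, K z -> U n z.
Proof.
intros HK HU mono cover. destruct (HK nat U HU cover) as [l Hl].
exists (list_max l). intros z Kz. destruct (Hl z Kz) as [n [Hn Unz]].
apply (mono n); [|exact Unz].
pose proof (proj1 (list_max_le l (list_max l)) (le_n _)) as Hmax.
rewrite Forall_forall in Hmax. auto.
Qed.

Lemma C_ball_separated (p y : C) : p <> y -> exists e : posreal, ~ ball p e y.
Proof.
intros npy. apply NNPP. intros Hall. apply npy.
apply (is_filter_lim_locally_unique (V := C_NormedModule)).
intros P [e He]. exists (pos_div_2 e). intros w Hw. apply He.
assert (Hyp : ball y (e / 2) p).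
{ apply ball_sym, NNPP. intros n. apply Hall. now exists (pos_div_2 e). }
replace (pos e) with (e / 2 + e / 2) by field.
now apply ball_triangle with p.
Qed.

Lemma Ccompact_complement_open (K : C -> Prop) : Ccompact K -> Copen (fun z => ~ K z).
Proof.
intros HK p nKp.
set (r := fun n : nat => mkposreal _ (RinvN_pos n)).
destruct (Ccompact_monotone_cover K (fun n y => locally y (fun w => ~ ball p (r n) w)) HK)
  as [N HN].
- intros n y Hy. now apply locally_locally.
- intros n m z nm. apply filter_imp. intros w nb b. apply nb.
  apply (ball_le p (r m)); [|exact b].
  apply Rinv_le_contravar; [apply INRp1_pos | apply Rplus_le_compat_r, le_INR, nm].
- intros y Ky.
  destruct (C_ball_separated p y) as [e He]; [intros ->; contradiction|].
  destruct (INR_archimed (e / 2) 1) as [n Hn]; [pose proof (cond_pos e); lra|].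
  exists n, (pos_div_2 e). intros w Hw Hpw. apply He.
  replace (pos e) with (e / 2 + e / 2) by field.
  apply ball_triangle with w; [|now apply ball_sym].
  apply (ball_le p (r n)); [|exact Hpw].
  simpl. pose proof (pos_INR n). pose proof (cond_pos e).
  apply (Rmult_le_reg_l (INR n + 1)); [lra|].
  rewrite Rinv_r by lra. nra.
- exists (r N). intros y Hy Ky. exact (locally_singleton _ _ (HN y Ky) Hy).
Qed.

Lemma Ccompact_bounded (K : C -> Prop) : Ccompact K -> Cbounded K.
Proof.
intros HK.
destruct (Ccompact_monotone_cover K (fun n z => Cmod z < INR n) HK) as [N HN].
- intros n. apply (open_comp Cmod (fun u => u < INR n)); [|apply open_lt].
  intros z _. apply (filterlim_norm (V := C_NormedModule)).
- intros n m z nm h. apply le_INR in nm. lra.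
- intros z _. destruct (INR_archimed 1 (Cmod z)) as [n Hn]; [lra|].
  exists n. lra.
- exists (INR N). intros z Kz. now apply Rlt_le, HN.
Qed.

Lemma Ccompact_image (f : C -> C) (K U : C -> Prop) :
  Ccompact K -> Copen U -> (forall z, K z -> U z) ->
  (forall z, U z -> continuous f z) -> Ccompact (image f K).
Proof.
intros HK HU KU Hf I W HW cover.
destruct (HK I (fun i z => U z /\ W i (f z))) as [l Hl].
- intros i z [Uz Wfz]. apply filter_and; [now apply HU | exact (Hf z Uz _ (HW i _ Wfz))].
- intros z Kz. destruct (cover (f z)) as [i Hi]; [now exists z|]. exists i. auto.
- exists l. intros w [z [Kz ->]]. destruct (Hl z Kz) as [i [Hi [_ Wi]]]. eauto.
Qed.

Lemma holomorphic_on_continuous (f : C -> C) (U : C -> Prop) :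
  holomorphic_on f U -> forall z, U z -> continuous f z.
Proof.
intros Hf z Uz P HP. destruct (Hf z Uz) as [l Hl].
apply locally_C.
exact (ex_derive_continuous (K := C_AbsRing) (V := C_NormedModule) f z (ex_intro _ l Hl) P HP).
Qed.

Lemma hole_absorb (F H S : C -> Prop) :
  hole F H -> Cconnected S -> (forall z, S z -> ~ F z) -> (exists y, S y /\ H y) ->
  forall v, S v -> H v.
Proof.
intros [[x [_ Hx]] _] cS SF [y [Sy Hy]] v Sv. apply Hx.
apply (component_absorb _ S x cS SF); [|exact Sv].
exists y. split; [exact Sy | now apply Hx].
Qed.

Lemma hole_disjoint (F H : C -> Prop) (y : C) : hole F H -> H y -> ~ F y.
Proof. intros [[x [_ Hx]] _] Hy. exact (component_sub _ _ _ (proj1 (Hx y) Hy)). Qed.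

Lemma hole_open (F H : C -> Prop) : Ccompact F -> hole F H -> Copen H.
Proof.
intros HF [[x [_ Hx]] _].
apply (open_ext (component (fun z => ~ F z) x)); [intros y; symmetry; apply Hx |].
now apply component_open, Ccompact_complement_open.
Qed.

Lemma hole_of_superset (F F' H : C -> Prop) (y : C) :
  (forall w, F w -> F' w) -> hole F H -> H y -> ~ F' y ->
  hole F' (component (fun z => ~ F' z) y) /\
  (forall v, component (fun z => ~ F' z) y v -> H v).
Proof.
intros FF' HH Hy nF'y.
assert (sub : forall v, component (fun z => ~ F' z) y v -> H v).
{ intros v [S [cS [SF' [Sy Sv]]]].
  apply (hole_absorb F H S HH cS); [intros z Sz Fz; apply (SF' z Sz), FF', Fz | eauto | exact Sv]. }
split; [|exact sub]. split.
- exists y. split; [exact nF'y | tauto].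
- destruct HH as [_ [M HM]]. exists M. auto.
Qed.

Section HolePullback.

Variables (phi : C -> C) (U K K' H : C -> Prop).
Hypotheses (HU : Copen U) (HK : Ccompact K) (HK' : Ccompact K')
  (KK' : forall z, K z -> K' z) (K'U : forall z, K' z -> U z)
  (phi_cont : forall z, U z -> continuous phi z) (phi_inj : injective_on phi U)
  (HH : hole (image phi K) H) (H_covered : forall w, H w -> image phi K' w).

Let W z := U z /\ H (phi z).

Lemma image_compact : Ccompact (image phi K).
Proof. apply (Ccompact_image phi K U); auto. Qed.

Lemma pullback_open : Copen W.
Proof.
intros z [Uz Hz]. apply filter_and; [now apply HU|].
exact (phi_cont z Uz H (hole_open _ H image_compact HH _ Hz)).
Qed.

Lemma pullback_sub : forall z, W z -> K' z.
Proof.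
intros z [Uz Hz]. destruct (H_covered _ Hz) as [k [K'k e]].
rewrite (phi_inj z k Uz (K'U k K'k) e). exact K'k.
Qed.

Lemma pullback_disjoint : forall z, W z -> ~ K z.
Proof. intros z [_ Hz] Kz. apply (hole_disjoint _ H (phi z) HH Hz). now exists z. Qed.

Lemma pullback_closed_off_K : forall p, ~ K p -> ~ W p -> locally p (fun y => ~ W y).
Proof.
intros p nKp nWp. apply NNPP. intros nloc.
assert (K'p : K' p).
{ apply NNPP. intros nK'p. apply nloc.
  apply (filter_imp (fun y => ~ K' y)); [intros y nK'y Wy; apply nK'y, pullback_sub, Wy|].
  now apply Ccompact_complement_open. }
assert (Up := K'U p K'p).
assert (nFp : ~ image phi K (phi p)).
{ intros [k [Kk e]]. apply nKp. rewrite (phi_inj p k Up (K'U k (KK' k Kk)) e). exact Kk. }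
destruct (Ccompact_complement_open _ image_compact _ nFp) as [e He].
destruct (not_locally_not W _ p nloc (phi_cont p Up _ (locally_ball (phi p) e)))
  as [z [[Uz Hz] Bz]].
(* the ball around [phi p] avoids [phi K] and meets [H] at [phi z], so it lies in [H] *)
apply nWp. split; [exact Up|].
apply (hole_absorb _ H (ball (phi p) e) HH (ball_connected _ _) He); [|apply ball_center].
now exists (phi z).
Qed.

Lemma hole_pullback : exists z0,
  hole K (component (fun z => ~ K z) z0) /\
  forall v, component (fun z => ~ K z) z0 v -> U v.
Proof.
destruct HH as [[x [nFx Hx]] _].
destruct (H_covered x (proj2 (Hx x) (component_refl _ _ nFx))) as [z0 [K'z0 ->]].
assert (Wz0 : W z0) by (split; [now apply K'U | apply Hx, component_refl, nFx]).
assert (sub := component_within_clopen _ W z0 pullback_open pullback_closed_off_K Wz0).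
exists z0. split; [split|].
- exists z0. split; [now apply pullback_disjoint | tauto].
- destruct (Ccompact_bounded K' HK') as [M HM]. exists M.
  intros v Hv. now apply HM, pullback_sub, sub.
- intros v Hv. now apply sub.
Qed.

End HolePullback.

Theorem mainTheorem3 (G Omega K K' : C -> Prop) (phi : C -> C) :
  Cdomain G -> Cdomain Omega ->
  Ccompact K -> Ccompact K' ->
  (forall z, K z -> K' z) -> (forall z, K' z -> G z) ->
  (forall z, G z -> Omega (phi z)) ->
  (exists U : C -> Prop, Copen U /\ (forall z, K' z -> U z) /\
     (forall z, U z -> G z) /\ holomorphic_on phi U /\ injective_on phi U) ->
  Oconvex G K -> Oconvex Omega (image phi K') ->
  Oconvex Omega (image phi K).
Proof.
intros _ _ HK HK' KK' K'G phiO [U [HU [K'U [UG [phi_hol phi_inj]]]]]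
  [_ [_ convK]] [_ [_ convK']].
assert (phi_cont := holomorphic_on_continuous phi U phi_hol).
split; [|split].
- apply (Ccompact_image phi K U); auto.
- intros w [z [Kz ->]]. now apply phiO, K'G, KK'.
- intros H HH.
  destruct (classic (exists y, H y /\ ~ image phi K' y)) as [[y [Hy nF'y]] | covered].
  + destruct (hole_of_superset (image phi K) (image phi K') H y) as [hole' sub]; auto.
    { intros w [z [Kz ->]]. exists z. auto. }
    destruct (convK' _ hole') as [w [Hw nOw]]. eauto.
  + destruct (hole_pullback phi U K K' H) as [z0 [hole0 sub0]]; auto.
    { intros w Hw. apply NNPP. intros nF'w. apply covered. eauto. }
    destruct (convK _ hole0) as [w [Hw nGw]].
    exfalso. now apply nGw, UG, sub0.
Qed.
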